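(* Let $S$ be a sample (a finite sequence of examples $z=(x,y)\in\mathcal X\times\{\pm1\}$), let $k>0$, and let $T\ge 2k\log|S|$. Let $p_1$ be the uniform distribution over the entries of $S$, and for $t=1,\dots,T$ let $h_t:\mathcal X\to\{\pm1\}$ be arbitrary hypotheses satisfying $\sum_{z=(x,y)\in S}p_t(z)1[h_t(x)\ne y]\le\frac{1}{5k}$ (i.e. $h_t$ is $\alpha$-weak for $p_t$ with $\alpha=\frac12-\frac1{5k}$), where $p_{t+1}(z)\propto p_t(z)\,2^{-1[h_t(x)=y]}$ for all $z\in S$ (Adaboost with parameter $\eta=\ln 2$). Then for every $z=(x,y)\in S$, $\frac1T\sum_{t=1}^T1[h_t(x)\ne y]\le\frac1k$.
   Context: $\log$ denotes the base-2 logarithm. The normalization in $p_{t+1}$ is over the entries of $S$ so that $p_{t+1}$ is a probability distribution. *)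

From HB Require Import structures.
From mathcomp Require Import all_boot all_order all_algebra.
From mathcomp Require Import all_classical all_reals exp.
Set Implicit Arguments. Unset Strict Implicit. Unset Printing Implicit Defensive.
Import Order.TTheory GRing.Theory Num.Theory.
Local Open Scope ring_scope.

Definition log2 {R : realType} (x : R) : R := ln x / ln 2.

(* 0/1 loss indicator 1[h(x) <> y]; labels {+-1} encoded as bool *)
Definition err {R : realType} {X : Type} (h : X -> bool) (z : X * bool) : R :=
  (h z.1 != z.2)%:R.

Definition ada_w {R : realType} {X : Type} (h : X -> bool) (z : X * bool) : R :=
  if h z.1 == z.2 then 2^-1 else 1.

From HB Require Import structures.
From mathcomp Require Import all_boot all_order all_algebra.
From mathcomp Require Import all_classical all_reals exp.
From mathcomp Require Import ring lra.
Set Implicit Arguments. Unset Strict Implicit. Unset Printing Implicit Defensive.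
Import Order.TTheory GRing.Theory Num.Theory.
Local Open Scope ring_scope.

(* Follow the weight of a fixed example z.  Round t multiplies it by
   2^(err_t(z) - 1) / Z_t, and if eps_t is the weighted error of h_t, the
   normalizer Z_t = (1 + eps_t) / 2 satisfies
   ln Z_t <= eps_t - ln 2, so after T rounds
     ln p_(T+1)(z) >= - ln |S| + m ln 2 - T / (5k),
   where m is the number of rounds in which z is misclassified.  As
   p_(T+1)(z) <= 1 and ln |S| <= T ln 2 / (2k), this gives
   m ln 2 <= T ln 2 / (2k) + T / (5k), and ln 2 >= 1/2 yields m <= 9T / (10k). *)

Lemma ln2_ge_half (R : realType) : 1 / 2 <= ln (2 : R).
Proof.
have := @le_ln1Dx R (- (1 / 2)) ltac:(lra).
have -> : 1 + - (1 / 2) = (2 : R)^-1 by lra.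
by rewrite lnV ?posrE //; lra.
Qed.

Section Reweighting.
Variables (R : realType) (I : finType).

Definition pos_distribution (q : I -> R) := (forall j, 0 < q j) /\ \sum_j q j = 1.

Lemma pos_distribution_le1 q j : pos_distribution q -> q j <= 1.
Proof.
case=> q_gt0 <-; rewrite (bigD1 j) //= lerDl.
by apply: sumr_ge0 => l _; exact: ltW.
Qed.

Lemma pos_distribution_weighted_gt0 (q w : I -> R) :
  pos_distribution q -> (forall j, 0 < w j) -> 0 < \sum_l q l * w l.
Proof.
move=> [q_gt0 q_sum] w_gt0.
have [j /andP[_ qj_gt0]] : exists j, true && (0 < q j).
  by apply: psumr_neq0P => [j _|]; [exact: ltW | rewrite q_sum; exact/eqP/oner_neq0].
rewrite (bigD1 j) //=; apply: ltr_wpDr; last exact: mulr_gt0.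
by apply: sumr_ge0 => l _; rewrite mulr_ge0 // ltW.
Qed.

Lemma reweight_pos_distribution (q w q' : I -> R) :
  pos_distribution q -> (forall j, 0 < w j) ->
  (forall j, q' j = q j * w j / \sum_l q l * w l) ->
  pos_distribution q'.
Proof.
move=> q_distr w_gt0 q'E.
have Z_gt0 := pos_distribution_weighted_gt0 q_distr w_gt0.
split=> [j|]; first by rewrite q'E divr_gt0 ?mulr_gt0 ?q_distr.1.
under eq_bigr do rewrite q'E.
by rewrite -mulr_suml divff // gt_eqF.
Qed.

End Reweighting.

Section AdaboostRound.
Variables (R : realType) (X : Type) (I : finType) (S : I -> X * bool).
Implicit Types (h : X -> bool) (z : X * bool) (q : I -> R).

Lemma err_ge0 h z : 0 <= err h z :> R.
Proof. by rewrite /err; case: (_ != _). Qed.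

Lemma ada_wE h z : ada_w h z = 2^-1 * (1 + err h z) :> R.
Proof. by rewrite /ada_w /err; case: eqP => _ /=; lra. Qed.

Lemma ada_w_gt0 h z : 0 < ada_w h z :> R.
Proof. by rewrite ada_wE mulr_gt0 ?invr_gt0 // ltr_wpDr ?err_ge0. Qed.

Lemma ln_ada_w h z : ln (ada_w h z : R) = (err h z - 1) * ln 2.
Proof.
rewrite /ada_w /err; case: eqP => _ /=; last by rewrite ln1; lra.
by rewrite lnV ?posrE //; lra.
Qed.

Lemma ada_normalizerE q h : \sum_j q j = 1 ->
  \sum_j q j * ada_w h (S j) = 2^-1 * (1 + \sum_j q j * err h (S j)).
Proof.
move=> q_sum; rewrite -[in 1 + _]q_sum mulrDr !mulr_sumr -big_split /=.
by apply: eq_bigr => j _; rewrite ada_wE; ring.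
Qed.

Lemma ln_ada_normalizer_le q h eps :
  pos_distribution q -> \sum_j q j * err h (S j) <= eps ->
  ln (\sum_j q j * ada_w h (S j)) <= eps - ln 2.
Proof.
move=> [q_gt0 q_sum] err_le; rewrite ada_normalizerE //.
have werr_ge0 : 0 <= \sum_j q j * err h (S j).
  by apply: sumr_ge0 => j _; rewrite mulr_ge0 ?err_ge0 ?ltW.
rewrite lnM ?posrE ?invr_gt0 //; last by lra.
rewrite lnV ?posrE //.
have : ln (1 + \sum_j q j * err h (S j)) <= \sum_j q j * err h (S j).
  by apply: le_ln1Dx; lra.
lra.
Qed.

Lemma ln_ada_update_ge q q' h eps i :
  pos_distribution q -> \sum_j q j * err h (S j) <= eps ->
  (forall j, q' j = q j * ada_w h (S j) / \sum_l q l * ada_w h (S l)) ->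
  ln (q i) + err h (S i) * ln 2 - eps <= ln (q' i).
Proof.
move=> q_distr err_le q'E.
have Z_gt0 := pos_distribution_weighted_gt0 q_distr (fun j => ada_w_gt0 h (S j)).
rewrite q'E ln_div ?posrE ?mulr_gt0 ?ada_w_gt0 ?q_distr.1 //.
rewrite lnM ?posrE ?ada_w_gt0 ?q_distr.1 // ln_ada_w.
have := ln_ada_normalizer_le q_distr err_le; lra.
Qed.

End AdaboostRound.

Definition mistakes {R : realType} {X : Type}
    (h : nat -> X -> bool) (z : X * bool) (t : nat) : R :=
  \sum_(1 <= s < t) err (h s) z.

Lemma mistakesSr (R : realType) X (h : nat -> X -> bool) z t : (1 <= t)%N ->
  mistakes h z t.+1 = mistakes h z t + err (h t) z :> R.
Proof. by move=> t_ge1; rewrite /mistakes big_nat_recr. Qed.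

Section Adaboost.
Variables (R : realType) (X : Type) (I : finType) (S : I -> X * bool).
Variables (h : nat -> X -> bool) (p : nat -> I -> R) (eps : R) (T : nat).
Hypothesis p1_distr : pos_distribution (p 1%N).
Hypothesis weak_learner : forall t, (1 <= t <= T)%N ->
  \sum_j p t j * err (h t) (S j) <= eps.
Hypothesis p_update : forall t, (1 <= t <= T)%N -> forall j,
  p t.+1 j = p t j * ada_w (h t) (S j) / \sum_l p t l * ada_w (h t) (S l).

Lemma adaboost_potential i d : (d <= T)%N ->
  pos_distribution (p d.+1) /\
  ln (p 1%N i) + mistakes h (S i) d.+1 * ln 2 - d%:R * eps <= ln (p d.+1 i).
Proof.
elim: d => [|d IH] d_lt; first by rewrite /mistakes big_geq //; split=> //; lra.
have [pd_distr pot] := IH (ltnW d_lt).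
have round : (1 <= d.+1 <= T)%N by rewrite d_lt.
split.
  by apply: (reweight_pos_distribution pd_distr _ (p_update round)) => j; exact: ada_w_gt0.
have := ln_ada_update_ge i pd_distr (weak_learner round) (p_update round).
by rewrite mistakesSr // [d.+1%:R]mulrSr; lra.
Qed.

End Adaboost.

Lemma uniform_pos_distribution (R : realType) n (q : 'I_n -> R) : (0 < n)%N ->
  (forall j, q j = 1 / n%:R) -> pos_distribution q.
Proof.
move=> n_gt0 qE; have n_gt0' : (0 : R) < n%:R by rewrite ltr0n.
split=> [j|]; first by rewrite qE divr_gt0.
under eq_bigr do rewrite qE.
by rewrite sumr_const card_ord div1r -[n%:R^-1 *+ n]mulr_natr mulVf ?gt_eqF.
Qed.

Lemma mistake_rate_le (R : realType) (k L m T : R) : 0 < k -> 0 <= T ->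
  2 * k * (L / ln 2) <= T -> m * ln 2 <= L + T * (1 / (5 * k)) ->
  1 / T * m <= 1 / k.
Proof.
move=> k_gt0 T_ge0 L_le m_le.
have ln2_gt0 : (0 : R) < ln 2 by have := ln2_ge_half R; lra.
have L_le' : 2 * k * L <= T * ln 2 by rewrite mulrA ler_pdivrMr in L_le.
have km_le : k * m * ln 2 <= T * ln 2.
  have : k * (m * ln 2) <= k * L + T / 5.
    have := ler_wpM2l (ltW k_gt0) m_le.
    by rewrite mulrDr; congr (_ <= _ + _); field; lra.
  have := ln2_ge_half R; nra.
have km_le' : k * m <= T by rewrite -(ler_pM2r ln2_gt0).
have [->|T_gt0] := eqVneq T 0; first by rewrite div1r invr0 mul0r divr_ge0 // ltW.
have {}T_gt0 : 0 < T by rewrite lt_def T_gt0.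
by rewrite !div1r ler_pdivrMl // ler_pdivlMr // mulrC.
Qed.

Theorem lemma2 (R : realType) (X : Type) (n : nat) (S : 'I_n -> X * bool)
  (k : R) (T : nat) (h : nat -> X -> bool) (p : nat -> 'I_n -> R) :
  0 < k ->
  2 * k * log2 (n%:R : R) <= T%:R ->
  (forall i, p 1%N i = 1 / n%:R) ->
  (forall t, (1 <= t <= T)%N ->
     \sum_(i < n) p t i * err (h t) (S i) <= 1 / (5 * k)) ->
  (forall t, (1 <= t <= T)%N -> forall i,
     p t.+1 i = p t i * ada_w (h t) (S i) /
                \sum_(j < n) p t j * ada_w (h t) (S j)) ->
  forall i : 'I_n,
    1 / T%:R * \sum_(1 <= t < T.+1) err (h t) (S i) <= 1 / k.
Proof.
move=> k_gt0 T_ge p1E weak_learner p_update i.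
have n_gt0 : (0 < n)%N by apply: leq_ltn_trans (ltn_ord i).
have p1_distr := uniform_pos_distribution n_gt0 p1E.
have [pT_distr potential] := adaboost_potential p1_distr weak_learner p_update i (leqnn T).
have lnpT_le0 := ln_le0 (pos_distribution_le1 i pT_distr).
rewrite p1E div1r lnV ?posrE ?ltr0n // in potential.
apply: (@mistake_rate_le _ _ _ (mistakes h (S i) T.+1) _ k_gt0 (ler0n _ _) T_ge).
lra.
Qed.
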